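(* Let $x,y,z$ be real numbers with $0<x\le y\le z\le 1$, and let $$f(x,y,z)=x^{y}\,y^{-x}\,z^{x}\,x^{-z}\,y^{z}\,z^{-y}.$$ Then $f(x,y,z)\ge 1$, and equality $f(x,y,z)=1$ is possible only when $x=y$ or $y=z$. *)

(* real powers via Rpower (defined for positive bases). *)
From Stdlib Require Import Reals.
Open Scope R_scope.

Definition fxyz (x y z : R) : R :=
  Rpower x y * Rpower y (- x) * Rpower z x * Rpower x (- z)
  * Rpower y z * Rpower z (- y).

(* Taking logarithms, ln f(x,y,z) = (z - x) ln y - (z - y) ln x - (y - x) ln z,
   which is (z - x) times the height of the graph of ln above the chord through
   (x, ln x) and (z, ln z), taken at y = ((z - y) x + (y - x) z) / (z - x).
   Strict concavity of ln makes it positive when x < y < z; it vanishes when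
   x = y or y = z. *)
From Stdlib Require Import Reals Lra.
Open Scope R_scope.

Lemma ln_lt_tangent (s t : R) :
  0 < s -> 0 < t -> t <> s -> ln t < ln s + (t - s) / s.
Proof.
  intros Hs Ht Hts.
  apply exp_lt_inv.
  rewrite exp_plus, !exp_ln by lra.
  assert (Hslope : (t - s) / s <> 0).
  { unfold Rdiv; apply Rmult_integral_contrapositive_currified;
      [lra | apply Rinv_neq_0_compat; lra]. }
  replace t with (s * (1 + (t - s) / s)) at 1 by (field; lra).
  apply Rmult_lt_compat_l; [lra | now apply exp_ineq1].
Qed.

Lemma ln_above_chord (x y z : R) :
  0 < x -> x < y -> y < z -> (z - y) * ln x + (y - x) * ln z < (z - x) * ln y.
Proof.
  intros Hx Hxy Hyz.
  pose proof (ln_lt_tangent y x ltac:(lra) Hx ltac:(lra)) as Hleft.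
  pose proof (ln_lt_tangent y z ltac:(lra) ltac:(lra) ltac:(lra)) as Hright.
  assert (Hchord : (z - y) * ((x - y) / y) + (y - x) * ((z - y) / y) = 0)
    by (field; lra).
  apply (Rmult_lt_compat_l (z - y)) in Hleft; [|lra].
  apply (Rmult_lt_compat_l (y - x)) in Hright; [|lra].
  lra.
Qed.

Lemma fxyz_exp (x y z : R) :
  fxyz x y z = exp ((z - x) * ln y - (z - y) * ln x - (y - x) * ln z).
Proof. unfold fxyz, Rpower; rewrite <- !exp_plus; f_equal; ring. Qed.

Theorem lemma2 (x y z : R) (hx : 0 < x) (hxy : x <= y) (hyz : y <= z) (hz : z <= 1) :
  1 <= fxyz x y z /\ (fxyz x y z = 1 -> x = y \/ y = z).
Proof.
  rewrite fxyz_exp, <- exp_0.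
  destruct (Req_dec x y) as [<- | Hxy]; [|destruct (Req_dec y z) as [<- | Hyz]].
  - replace (_ - _ - _) with 0 by ring; split; [lra | auto].
  - replace (_ - _ - _) with 0 by ring; split; [lra | auto].
  - pose proof (ln_above_chord x y z hx ltac:(lra) ltac:(lra)) as Hgap.
    assert (Hexp : exp 0 < exp ((z - x) * ln y - (z - y) * ln x - (y - x) * ln z))
      by (apply exp_increasing; lra).
    split; [lra | intro Heq; lra].
Qed.
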